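(* In the finite-sum setting, run Algorithm LCSVRG with parameter $\gamma$ and let $\beta\in(0,2\gamma-L_0)$ be such that $$\tilde L:=\frac{2\gamma-\beta-L_0}{2}-\frac{L_0^2(T-1)}{2\beta b}>0.$$ Then, with $x^{(r,t)}:=x^{rT+t}$, for every epoch $r\ge0$ and every $0\le t<T$, $$\tilde L\sum_{j=0}^t\mathbb{E}\|x^{(r,j+1)}-x^{(r,j)}\|^2\le\mathbb{E}[\psi_0(x^{(r,0)})]-\mathbb{E}[\psi_0(x^{(r,t+1)})].$$
   Context: Problem (P): minimize $\psi_0(x):=f_0(x)+\chi_0(x)$ over $x\in\mathbb{R}^d$ subject to $\psi_i(x):=f_i(x)+\chi_i(x)\le\eta_i$, $i\in[m]:=\{1,\dots,m\}$, with $\chi_0$ proper convex lsc, $\chi_i$ convex continuous on $\mathrm{dom}\,\chi_0$, $f_i$ with $L_i$-Lipschitz gradients, finite optimal value, and nonempty compact feasible set; vector inequalities componentwise. Finite-sum setting: $f_0(x)=\frac1n\sum_{j=1}^nF(x,\xi_j)$ where each $F(\cdot,\xi_j)$ has $L_0$-Lipschitz gradient. Algorithm LCSVRG: given $x^0\in\mathrm{dom}\,\chi_0$, $\eta^0$ with $\psi(x^0)<\eta^0<\eta$, epoch length $T$, batch size $b$, $\gamma>0$. At step $k$: if $k$ is a multiple of $T$, set $G^k=\nabla f_0(x^k)$; otherwise draw a mini-batch $B_k$ of $b$ indices independently and uniformly from $\{1,\dots,n\}$ and set $G^k=\frac1b\sum_{j\in B_k}[\nabla F(x^k,\xi_j)-\nabla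 F(x^{k-1},\xi_j)]+G^{k-1}$. Set $\psi_0^k(x)=\langle G^k,x\rangle+\frac{\gamma}{2}\|x-x^k\|^2+\chi_0(x)$, $\psi_i^k(x)=f_i(x^k)+\langle\nabla f_i(x^k),x-x^k\rangle+\frac{L_i}{2}\|x-x^k\|^2+\chi_i(x)$ ($i\in[m]$), let $x^{k+1}$ minimize $\psi_0^k$ subject to $\psi_i^k(x)\le\eta_i^k$, $i\in[m]$, and set $\eta^{k+1}=\eta^k+\delta^k$ with $\delta^k>0$, $\eta^{k+1}<\eta$. *)

From HB Require Import structures.
From mathcomp Require Import all_boot all_order all_algebra.
From mathcomp Require Import all_classical all_reals all_analysis.
Set Implicit Arguments. Unset Strict Implicit. Unset Printing Implicit Defensive.
Import Order.TTheory GRing.Theory Num.Theory.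
Import numFieldNormedType.Exports.
Local Open Scope classical_set_scope.
Local Open Scope ring_scope.

Section LCSVRG.
Variables (R : realType) (d : nat).
Local Notation vec := 'rV[R]_d.

Definition dotp (u v : vec) : R := \sum_(i < d) u ord0 i * v ord0 i.
Definition enorm (v : vec) : R := Num.sqrt (dotp v v).
Definition sqnorm (v : vec) : R := dotp v v.

Definition is_gradient (f : vec -> R) (g : vec -> vec) : Prop :=
  forall x, differentiable f x /\ forall v, 'd f x v = dotp (g x) v.

Definition lipschitz_map (L : R) (g : vec -> vec) : Prop :=
  0 <= L /\ forall x y, enorm (g x - g y) <= L * enorm (x - y).

Definition edom (h : vec -> \bar R) : set vec := [set x | h x < +oo]%E.

Definition proper_fun (h : vec -> \bar R) : Prop :=
  (forall x, h x != -oo%E) /\ (exists x, h x < +oo)%E.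

Definition convex_efun (h : vec -> \bar R) : Prop :=
  forall (x y : vec) (t : R), 0 <= t <= 1 ->
    (h (t *: x + (1 - t) *: y)%R <= t%:E * h x + (1 - t)%:E * h y)%E.

Definition convex_set_v (D : set vec) : Prop :=
  forall (x y : vec) (t : R), D x -> D y -> 0 <= t <= 1 -> D (t *: x + (1 - t) *: y).

Definition convex_on (D : set vec) (h : vec -> R) : Prop :=
  forall (x y : vec) (t : R), D x -> D y -> 0 <= t <= 1 ->
    h (t *: x + (1 - t) *: y) <= t * h x + (1 - t) * h y.

(* a mini-batch: b indices drawn (with replacement) from {1..n} *)
Definition batch (n b : nat) := {ffun 'I_b -> 'I_n}.

Variables (n b : nat).

Definition favg (F : 'I_n -> vec -> R) (x : vec) : R :=
  n%:R^-1 * \sum_(j < n) F j x.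
Definition gavg (gF : 'I_n -> vec -> vec) (x : vec) : vec :=
  n%:R^-1 *: \sum_(j < n) gF j x.

(* the SVRG gradient estimator G^k along the sample path w (B_k = w k) *)
Fixpoint svrgG (gF : 'I_n -> vec -> vec) (T : nat) (w : nat -> batch n b)
    (x : nat -> vec) (k : nat) : vec :=
  match k with
  | 0 => gavg gF (x 0%N)
  | k'.+1 =>
      if (T %| k'.+1)%N then gavg gF (x k)
      else b%:R^-1 *: (\sum_(l < b) (gF (w k l) (x k) - gF (w k l) (x k')))
           + svrgG gF T w x k'
  end.

Definition sub_obj (chi0 : vec -> \bar R) (gamma : R) (G xk : vec) (x : vec)
  : \bar R :=
  ((dotp G x + gamma / 2 * sqnorm (x - xk))%:E + chi0 x)%E.

Definition sub_con (f : vec -> R) (g : vec -> vec) (L : R) (chi : vec -> R)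
    (xk x : vec) : R :=
  f xk + dotp (g xk) (x - xk) + L / 2 * sqnorm (x - xk) + chi x.

Variable m : nat.

Definition lcsvrg_run (gF : 'I_n -> vec -> vec) (chi0 : vec -> \bar R)
    (fc : 'I_m -> vec -> R) (gc : 'I_m -> vec -> vec) (Lc : 'I_m -> R)
    (chic : 'I_m -> vec -> R) (gamma : R) (T : nat) (eta : nat -> 'I_m -> R)
    (x0 : vec) (w : nat -> batch n b) (x : nat -> vec) : Prop :=
  x 0%N = x0 /\
  forall k : nat,
    let feas := [set y | forall i, sub_con (fc i) (gc i) (Lc i) (chic i) (x k) y
                                   <= eta k i] in
    feas (x k.+1) /\
    forall y, feas y ->
      (sub_obj chi0 gamma (svrgG gF T w x k) (x k) (x k.+1)
       <= sub_obj chi0 gamma (svrgG gF T w x k) (x k) y)%E.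

Definition ext_path (N : nat) (w0 : batch n b) (s : {ffun 'I_N -> batch n b})
  : nat -> batch n b :=
  fun k => if insub k is Some i then s i else w0.

(* expectation over the first N (i.i.d. uniform) mini-batches *)
Definition Exp (N : nat) (w0 : batch n b) (Z : (nat -> batch n b) -> R) : R :=
  #|{: {ffun 'I_N -> batch n b}}|%:R^-1 *
  \sum_(s : {ffun 'I_N -> batch n b}) Z (ext_path w0 s).

End LCSVRG.

From HB Require Import structures.
From mathcomp Require Import all_boot all_order all_algebra.
From mathcomp Require Import all_classical all_reals all_analysis.
From mathcomp Require Import ring lra.
Import Order.TTheory GRing.Theory Num.Theory.
Import numFieldNormedType.Exports.
Local Open Scope classical_set_scope.
Local Open Scope ring_scope.

(* Each iterate minimizes a gamma-strongly convex model over a convex set that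
   contains the previous iterate.  Comparing the minimizer with that point
   (three-point inequality) and combining with the descent lemma for f_0 and
   Young's inequality gives
     psi_0(x^{k+1}) <= psi_0(x^k) - (gamma - (L_0 + beta)/2) |x^{k+1} - x^k|^2
                       + |grad f_0(x^k) - G^k|^2 / (2 beta).
   The estimator error vanishes at the start of each epoch.  Within an epoch,
   resampling the fresh mini-batch shows that its expected square grows by at
   most L_0^2/b |x^{k+1} - x^k|^2 per step: the correction is a mean of b
   independent centred samples.  Summing over the epoch, each expected squared
   step enters the accumulated error at most T - 1 times. *)

Section InnerProduct.
Context {R : realType} {d : nat}.
Local Notation vec := 'rV[R]_d.
Implicit Types (u v w : vec).

Lemma dotpC u v : dotp u v = dotp v u.
Proof. by apply: eq_bigr => i _; rewrite mulrC. Qed.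

Lemma dotpDl u w v : dotp (u + w) v = dotp u v + dotp w v.
Proof. by rewrite /dotp -big_split; apply: eq_bigr => i _; rewrite mxE mulrDl. Qed.

Lemma dotpBl u w v : dotp (u - w) v = dotp u v - dotp w v.
Proof. by rewrite /dotp -sumrB; apply: eq_bigr => i _; rewrite !mxE mulrBl. Qed.

Lemma dotpZl a u v : dotp (a *: u) v = a * dotp u v.
Proof. by rewrite /dotp mulr_sumr; apply: eq_bigr => i _; rewrite mxE mulrA. Qed.

Lemma dotpDr u w v : dotp v (u + w) = dotp v u + dotp v w.
Proof. by rewrite dotpC dotpDl !(dotpC v). Qed.

Lemma dotpBr u w v : dotp v (u - w) = dotp v u - dotp v w.
Proof. by rewrite dotpC dotpBl !(dotpC v). Qed.

Lemma dotpZr a u v : dotp v (a *: u) = a * dotp v u.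
Proof. by rewrite dotpC dotpZl dotpC. Qed.

Lemma dotp0l v : dotp 0 v = 0.
Proof. by rewrite /dotp big1 // => i _; rewrite mxE mul0r. Qed.

Lemma dotp0r v : dotp v 0 = 0.
Proof. by rewrite dotpC dotp0l. Qed.

Lemma dotp_suml (I : Type) (r : seq I) (P : pred I) (f : I -> vec) v :
  dotp (\sum_(i <- r | P i) f i) v = \sum_(i <- r | P i) dotp (f i) v.
Proof. by elim/big_rec2: _ => [|i y1 y2 _ <-]; rewrite ?dotp0l ?dotpDl. Qed.

Lemma dotp_sumr (I : Type) (r : seq I) (P : pred I) (f : I -> vec) v :
  dotp v (\sum_(i <- r | P i) f i) = \sum_(i <- r | P i) dotp v (f i).
Proof. by rewrite dotpC dotp_suml; apply: eq_bigr => i _; rewrite dotpC. Qed.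

Lemma sqnorm_ge0 v : 0 <= sqnorm v.
Proof. by apply: sumr_ge0 => i _; rewrite -expr2 sqr_ge0. Qed.

Lemma sqnorm_eq0 v : sqnorm v = 0 -> v = 0.
Proof.
move=> /eqP; rewrite psumr_eq0 => [/allP v0|i _]; last by rewrite -expr2 sqr_ge0.
apply/rowP => i; have := v0 i (mem_index_enum _).
by rewrite -expr2 sqrf_eq0 mxE => /eqP.
Qed.

Lemma sqr_enorm v : enorm v ^+ 2 = sqnorm v.
Proof. by rewrite sqr_sqrtr // sqnorm_ge0. Qed.

Lemma enorm_ge0 v : 0 <= enorm v.
Proof. exact: sqrtr_ge0. Qed.

Lemma sqnormD u v : sqnorm (u + v) = sqnorm u + 2 * dotp u v + sqnorm v.
Proof. by rewrite /sqnorm dotpDl !dotpDr (dotpC v u); ring. Qed.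

Lemma sqnormB u v : sqnorm (u - v) = sqnorm u - 2 * dotp u v + sqnorm v.
Proof. by rewrite /sqnorm dotpBl !dotpBr (dotpC v u); ring. Qed.

Lemma sqnormBC u v : sqnorm (u - v) = sqnorm (v - u).
Proof. by rewrite !sqnormB (dotpC v); ring. Qed.

Lemma sqnormZ a v : sqnorm (a *: v) = a ^+ 2 * sqnorm v.
Proof. by rewrite /sqnorm dotpZl dotpZr mulrA expr2. Qed.

Lemma enormZ a v : enorm (a *: v) = `|a| * enorm v.
Proof. by rewrite /enorm -/(sqnorm _) sqnormZ sqrtrM ?sqr_ge0 // sqrtr_sqr. Qed.

Lemma dotp_le_young {beta : R} u v : 0 < beta ->
  dotp u v <= sqnorm u / (2 * beta) + beta / 2 * sqnorm v.
Proof.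
move=> beta_gt0; have := sqnorm_ge0 (u - beta *: v).
rewrite sqnormB dotpZr sqnormZ => sq_ge0; rewrite -subr_ge0.
have -> : sqnorm u / (2 * beta) + beta / 2 * sqnorm v - dotp u v
    = (sqnorm u - 2 * (beta * dotp u v) + beta ^+ 2 * sqnorm v) / (2 * beta).
  by field; rewrite gt_eqF.
by rewrite divr_ge0 // mulr_ge0 // ltW.
Qed.

Lemma dotp_le_enorm u v : dotp u v <= enorm u * enorm v.
Proof.
have [u0|u_neq0] := eqVneq (sqnorm u) 0.
  by rewrite (sqnorm_eq0 _ u0) dotp0l mulr_ge0 // enorm_ge0.
have u_gt0 : 0 < sqnorm u by rewrite lt_neqAle eq_sym u_neq0 sqnorm_ge0.
have := sqnorm_ge0 (dotp u v *: u - sqnorm u *: v).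
rewrite sqnormB !sqnormZ dotpZl dotpZr.
have -> : dotp u v ^+ 2 * sqnorm u - 2 * (dotp u v * (sqnorm u * dotp u v))
    + sqnorm u ^+ 2 * sqnorm v = sqnorm u * (sqnorm u * sqnorm v - dotp u v ^+ 2).
  by ring.
rewrite pmulr_rge0 // subr_ge0 => sq_le.
apply: le_trans (ler_norm _) _.
rewrite /enorm -sqrtrM ?sqnorm_ge0 // -(sqrtr_sqr (dotp u v)).
by rewrite ler_sqrt // mulr_ge0 // sqnorm_ge0.
Qed.

Lemma subr_convex_comb t u v w :
  t *: u + (1 - t) *: v - w = t *: (u - w) + (1 - t) *: (v - w).
Proof.
have ww : t *: w + (1 - t) *: w = w by rewrite -scalerDl addrC subrK scale1r.
by rewrite !scalerBr addrACA -opprD ww.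
Qed.

Lemma sqnorm_convex_comb t u v :
  sqnorm (t *: u + (1 - t) *: v)
  = t * sqnorm u + (1 - t) * sqnorm v - t * (1 - t) * sqnorm (u - v).
Proof. by rewrite (sqnormD (t *: u)) !sqnormZ (sqnormB u) dotpZl dotpZr; ring. Qed.

End InnerProduct.

Section DescentLemma.
Context {R : realType} {d : nat}.
Local Notation vec := 'rV[R]_d.

Lemma is_derive_line (f : vec -> R) (g : vec -> vec) (x v : vec) (s : R) :
  is_gradient f g ->
  is_derive s 1 (fun t : R => f (x + t *: v)) (dotp (g (x + s *: v)) v).
Proof.
move=> fg; set a := x + s *: v.
have shift_line : (fun h : R => h^-1 *: (((fun t : R => f (x + t *: v)) \o shift s)
      (h *: 1) - f (x + s *: v)))
    = (fun h : R => h^-1 *: ((f \o shift a) (h *: v) - f a)).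
  apply: funext => h /=; congr (_ *: (f _ - _)).
  by rewrite /a /= scalerDl [h *: 1]mulr1 addrCA addrC.
have [df dfE] := fg a.
apply: DeriveDef; first by rewrite /derivable shift_line; exact: diff_derivable.
by rewrite /derive shift_line -/(derive f a v) deriveE // dfE.
Qed.

(* The MVT is applied to f(x + t v) - <g x, v> t - (L/2)|v|^2 t^2, whose
   derivative is nonpositive on [0, 1] by Cauchy-Schwarz and the Lipschitz
   bound. *)
Lemma descent_lemma {f : vec -> R} {g : vec -> vec} {L : R} :
  is_gradient f g -> lipschitz_map L g ->
  forall x y, f y <= f x + dotp (g x) (y - x) + L / 2 * sqnorm (y - x).
Proof.
move=> fg [L_ge0 gL] x y.
set v := y - x; set a := dotp (g x) v; set c := L / 2 * sqnorm v.
pose phi : R -> R :=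
  (fun t : R => f (x + t *: v)) - a \*: (@id R) - c \*: (@id R * @id R).
pose dphi (s : R) :=
  dotp (g (x + s *: v)) v - a *: (1 : R) - c *: (s *: (1 : R) + s *: 1).
have phi_derive (s : R) : is_derive s 1 phi (dphi s).
  by apply: is_deriveB; first apply: is_deriveB; exact: is_derive_line.
have [s s01 phiE] :
    exists2 s : R, s \in `]0, 1[%R & phi 1 - phi 0 = dphi s * (1 - 0).
  apply: (MVT ltr01 (fun z _ => phi_derive z)).
  by apply: derivable_within_continuous => z _; case: (phi_derive z).
move: s01; rewrite in_itv /= => /andP[s_gt0 s_lt1].
have scaleE (k r : R) : k *: r = k * r by [].
have gdiff : dotp (g (x + s *: v) - g x) v <= L * s * sqnorm v.
  apply: le_trans (dotp_le_enorm _ _) _; rewrite -sqr_enorm expr2 mulrA.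
  apply: ler_wpM2r; first exact: enorm_ge0.
  have := gL (x + s *: v) x.
  by rewrite addrAC subrr add0r enormZ gtr0_norm // mulrA.
have xvy : x + v = y by rewrite /v addrC subrK.
have phi_at t : phi t = f (x + t *: v) - a * t - c * (t * t) by [].
rewrite !phi_at /dphi !scaleE scale1r scale0r addr0 xvy in phiE.
rewrite /c /a dotpBl in gdiff phiE *; lra.
Qed.

End DescentLemma.

Lemma lipschitz_sqnorm {R : realType} {d : nat} (L : R)
    (g : 'rV[R]_d -> 'rV[R]_d) x y :
  lipschitz_map L g -> sqnorm (g x - g y) <= L ^+ 2 * sqnorm (x - y).
Proof.
move=> [L_ge0 gL]; rewrite -!sqr_enorm -exprMn.
by rewrite lerXn2r ?nnegrE ?mulr_ge0 ?enorm_ge0.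
Qed.

Lemma favg_descent {R : realType} {d n : nat} {F : 'I_n -> 'rV[R]_d -> R}
    {gF : 'I_n -> 'rV[R]_d -> 'rV[R]_d} {L : R} :
  (0 < n)%N -> (forall j, is_gradient (F j) (gF j)) ->
  (forall j, lipschitz_map L (gF j)) ->
  forall x y,
    favg F y <= favg F x + dotp (gavg gF x) (y - x) + L / 2 * sqnorm (y - x).
Proof.
move=> n_gt0 Fg gL x y; have n_neq0 : n%:R != 0 :> R by rewrite pnatr_eq0 -lt0n.
rewrite /favg /gavg dotpZl dotp_suml.
have : \sum_j F j y
    <= \sum_j (F j x + dotp (gF j x) (y - x) + L / 2 * sqnorm (y - x)).
  by apply: ler_sum => j _; exact: descent_lemma.
rewrite !big_split /= sumr_const card_ord => sumF_le.
have -> : L / 2 * sqnorm (y - x) = n%:R^-1 * (L / 2 * sqnorm (y - x) *+ n).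
  by rewrite mulrnAr -mulrnAl -(mulr_natr n%:R^-1) mulVf ?mul1r.
by rewrite -!mulrDr ler_wpM2l // invr_ge0 ler0n.
Qed.

Definition ffun_upd {I : finType} {J : Type} (s : {ffun I -> J}) (i0 : I) (j : J)
  : {ffun I -> J} := [ffun i => if i == i0 then j else s i].

Section FfunUpdate.
Context {I : finType} {J : Type}.
Implicit Types (s : {ffun I -> J}) (j : J).

Lemma ffun_upd_same s i0 j : ffun_upd s i0 j i0 = j.
Proof. by rewrite ffunE eqxx. Qed.

Lemma ffun_upd_other s i0 j i : i != i0 -> ffun_upd s i0 j i = s i.
Proof. by rewrite ffunE => /negbTE ->. Qed.

Lemma ffun_updK s i0 j : ffun_upd (ffun_upd s i0 j) i0 (s i0) = s.
Proof. by apply/ffunP => i; rewrite !ffunE; case: eqP => // ->. Qed.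

End FfunUpdate.

(* (s, j) |-> (s with s i0 := j, s i0) is an involution of {ffun I -> J} * J. *)
Lemma sum_ffun_upd {V : nmodType} {I J : finType} (i0 : I)
    (h : {ffun I -> J} -> V) :
  \sum_(s : {ffun I -> J}) \sum_(j : J) h (ffun_upd s i0 j)
  = (\sum_(s : {ffun I -> J}) h s) *+ #|J|.
Proof.
rewrite pair_big /=.
pose swap (p : {ffun I -> J} * J) := (ffun_upd p.1 i0 p.2, p.1 i0).
have swapK : involutive swap.
  by case=> s j; rewrite /swap /= ffun_updK ffun_upd_same.
rewrite (reindex_inj (inv_inj swapK)) /=.
under eq_bigr => p _ do rewrite ffun_updK.
rewrite -(pair_big xpredT xpredT (fun s (_ : J) => h s)) /= -sumrMnl.
by apply: eq_bigr => s _; rewrite sumr_const.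
Qed.

Lemma card_batch_gt0 (n b : nat) : (0 < n)%N -> (0 < #|{: batch n b}|)%N.
Proof. by move=> n_gt0; apply/card_gt0P; exists [ffun _ => Ordinal n_gt0]. Qed.

Section MiniBatch.
Context {R : realType} {d n b : nat}.
Local Notation vec := 'rV[R]_d.

Definition avg_batch (Z : batch n b -> R) : R :=
  #|{: batch n b}|%:R^-1 * \sum_(B : batch n b) Z B.

Definition batch_mean (u : 'I_n -> vec) (B : batch n b) : vec :=
  b%:R^-1 *: \sum_(l < b) u (B l).

Lemma sum_batch_at (l : 'I_b) (h : 'I_n -> R) :
  (\sum_(B : batch n b) h (B l)) *+ n = (\sum_j h j) *+ #|{: batch n b}|.
Proof.
have := sum_ffun_upd l (fun B : batch n b => h (B l)); rewrite card_ord => <-.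
under eq_bigr => B _ do under eq_bigr => j _ do rewrite ffun_upd_same.
by rewrite sumr_const.
Qed.

Hypothesis n_gt0 : (0 < n)%N.
Hypothesis b_gt0 : (0 < b)%N.
Let n_neq0 : n%:R != 0 :> R. Proof. by rewrite pnatr_eq0 -lt0n. Qed.

Lemma sum_batch_cross0 (l l' : 'I_b) (u a : 'I_n -> vec) :
  l != l' -> \sum_j u j = 0 ->
  \sum_(B : batch n b) dotp (u (B l)) (a (B l')) = 0.
Proof.
move=> ll' u0; apply: (mulfI n_neq0); rewrite mulr0 mulr_natl.
have := sum_ffun_upd l (fun B : batch n b => dotp (u (B l)) (a (B l'))).
rewrite card_ord => <-; rewrite big1 // => B _.
under eq_bigr => j _ do rewrite ffun_upd_same ffun_upd_other 1?eq_sym //.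
by rewrite -dotp_suml u0 dotp0l.
Qed.

Lemma avg_batch_dotp_mean0 (a : vec) (u : 'I_n -> vec) : \sum_j u j = 0 ->
  avg_batch (fun B => dotp a (batch_mean u B)) = 0.
Proof.
move=> u0; rewrite /avg_batch /batch_mean.
under eq_bigr => B _ do rewrite dotpZr dotp_sumr.
rewrite -mulr_sumr exchange_big /= big1 ?mulr0 // => l _.
apply: (mulfI n_neq0).
rewrite mulr0 mulr_natl (sum_batch_at l (fun j => dotp a (u j))).
by rewrite -dotp_sumr u0 dotp0r mul0rn.
Qed.

(* Expanding the square, the cross terms between distinct draws vanish. *)
Lemma avg_batch_sqnorm_mean (u : 'I_n -> vec) : \sum_j u j = 0 ->
  avg_batch (fun B : batch n b => sqnorm (batch_mean u B))
  = (b%:R * n%:R)^-1 * \sum_j sqnorm (u j).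
Proof.
move=> u0; rewrite /avg_batch /batch_mean.
have b0 : b%:R != 0 :> R by rewrite pnatr_eq0 -lt0n.
have B0 : #|{: batch n b}|%:R != 0 :> R.
  by rewrite pnatr_eq0 -lt0n card_batch_gt0.
have diag (l : 'I_b) : \sum_(B : batch n b) \sum_(l' < b) dotp (u (B l)) (u (B l'))
    = #|{: batch n b}|%:R / n%:R * \sum_j sqnorm (u j).
  rewrite exchange_big (bigD1 l) //= [X in _ + X]big1 => [|l' l'l]; last first.
    by apply: sum_batch_cross0; rewrite // eq_sym.
  apply: (mulIf n_neq0); rewrite addr0 mulrAC divfK // mulr_natr mulr_natl.
  exact: (sum_batch_at l (fun j => sqnorm (u j))).
under eq_bigr => B _ do rewrite sqnormZ /sqnorm dotp_suml.
under eq_bigr => B _ do under eq_bigr => l _ do rewrite dotp_sumr.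
rewrite -mulr_sumr exchange_big /=.
under eq_bigr => l _ do rewrite diag.
rewrite sumr_const card_ord -mulr_natl; field.
by rewrite B0 b0 n_neq0.
Qed.

End MiniBatch.

Definition center {R : realType} {d n : nat} (z : 'I_n -> 'rV[R]_d) (i : 'I_n)
  : 'rV[R]_d := n%:R^-1 *: \sum_j z j - z i.

Section Centering.
Context {R : realType} {d n : nat}.
Local Notation vec := 'rV[R]_d.
Hypothesis n_gt0 : (0 < n)%N.
Let n_neq0 : n%:R != 0 :> R. Proof. by rewrite pnatr_eq0 -lt0n. Qed.

Lemma sum_center (z : 'I_n -> vec) : \sum_i center z i = 0.
Proof.
rewrite /center sumrB sumr_const card_ord -scaler_nat scalerA mulfV //.
by rewrite scale1r subrr.
Qed.

Lemma sum_sqnorm_center (z : 'I_n -> vec) :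
  \sum_i sqnorm (center z i) <= \sum_i sqnorm (z i).
Proof.
set M := n%:R^-1 *: \sum_j z j.
have zM : \sum_j z j = n%:R *: M by rewrite /M scalerA mulfV // scale1r.
under eq_bigr => i _ do rewrite /center -/M sqnormB.
rewrite !big_split /= sumrN sumr_const card_ord -mulr_sumr -dotp_sumr zM dotpZr.
rewrite -/(sqnorm M) -[sqnorm M *+ n]mulr_natl.
have := sqnorm_ge0 M; have : 0 <= n%:R :> R by []; nra.
Qed.

End Centering.

Definition path_upd {T : Type} (w : nat -> T) (k : nat) (y : T) : nat -> T :=
  fun i => if i == k then y else w i.

Section Expectation.
Context {R : realType} {n b N : nat} {w0 : batch n b}.
Implicit Types Z : (nat -> batch n b) -> R.

Lemma eq_Exp Z1 Z2 : (forall w, Z1 w = Z2 w) -> Exp N w0 Z1 = Exp N w0 Z2.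
Proof. by move=> Z12; rewrite /Exp; congr (_ * _); apply: eq_bigr => s _. Qed.

Lemma ExpD Z1 Z2 : Exp N w0 (fun w => Z1 w + Z2 w) = Exp N w0 Z1 + Exp N w0 Z2.
Proof. by rewrite /Exp big_split mulrDr. Qed.

Lemma ExpB Z1 Z2 : Exp N w0 (fun w => Z1 w - Z2 w) = Exp N w0 Z1 - Exp N w0 Z2.
Proof. by rewrite /Exp sumrB mulrBr. Qed.

Lemma ExpZ c Z : Exp N w0 (fun w => c * Z w) = c * Exp N w0 Z.
Proof. by rewrite /Exp -mulr_sumr mulrCA. Qed.

Lemma ler_Exp Z1 Z2 : (forall w, Z1 w <= Z2 w) -> Exp N w0 Z1 <= Exp N w0 Z2.
Proof.
by move=> Z12; rewrite /Exp ler_wpM2l ?invr_ge0 ?ler0n // ler_sum.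
Qed.

Lemma Exp0 : Exp N w0 (fun _ => 0 : R) = 0.
Proof. by rewrite /Exp big1 ?mulr0. Qed.

Lemma Exp_ge0 Z : (forall w, 0 <= Z w) -> 0 <= Exp N w0 Z.
Proof. by move=> Z_ge0; rewrite -Exp0; apply: ler_Exp. Qed.

Lemma Exp_resample {k Z} : (0 < n)%N -> (k < N)%N ->
  Exp N w0 Z = Exp N w0 (fun w => avg_batch (fun B => Z (path_upd w k B))).
Proof.
move=> n_gt0 kN; rewrite /Exp /avg_batch; congr (_ * _).
pose k' := Ordinal kN.
have upd_ext s B : path_upd (ext_path w0 s) k B = ext_path w0 (ffun_upd s k' B).
  apply: funext => i; rewrite /path_upd /ext_path.
  case: insubP => [j _ jE|iN]; first by rewrite ffunE -val_eqE /= jE.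
  by case: eqP iN => // ->; rewrite kN.
under [RHS]eq_bigr => s _ do under eq_bigr => B _ do rewrite upd_ext.
rewrite -mulr_sumr (sum_ffun_upd k' (fun s => Z (ext_path w0 s))).
by rewrite -[X in _ * X]mulr_natl mulKf // pnatr_eq0 -lt0n card_batch_gt0.
Qed.

End Expectation.

Definition model_feas {R : realType} {d m : nat} (fc : 'I_m -> 'rV[R]_d -> R)
    (gc : 'I_m -> 'rV[R]_d -> 'rV[R]_d) (Lc : 'I_m -> R)
    (chic : 'I_m -> 'rV[R]_d -> R) (e : 'I_m -> R) (xk : 'rV[R]_d)
  : set 'rV[R]_d :=
  [set y | forall i, sub_con (fc i) (gc i) (Lc i) (chic i) xk y <= e i].

Section LinearizedModel.
Context {R : realType} {d m : nat}.
Local Notation vec := 'rV[R]_d.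
Context {chi0 : vec -> \bar R} {fc : 'I_m -> vec -> R} {gc : 'I_m -> vec -> vec}
  {Lc : 'I_m -> R} {chic : 'I_m -> vec -> R} {gamma : R}.
Hypothesis chi0_proper : proper_fun chi0.
Hypothesis chi0_convex : convex_efun chi0.
Hypothesis Lc_ge0 : forall i, 0 <= Lc i.
Hypothesis chic_convex : forall i, convex_on (edom chi0) (chic i).
Hypothesis gamma_gt0 : 0 < gamma.
Local Notation feas := (model_feas fc gc Lc chic).
Local Notation obj G xk := (sub_obj chi0 gamma G xk).

Lemma edom_fine {y} : edom chi0 y -> chi0 y = (fine (chi0 y))%:E.
Proof. by have := chi0_proper.1 y; rewrite /edom /=; case: (chi0 y). Qed.

Lemma edom_convex_comb {y z t} : edom chi0 y -> edom chi0 z -> 0 <= t <= 1 ->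
  edom chi0 (t *: y + (1 - t) *: z) /\
  fine (chi0 (t *: y + (1 - t) *: z))
    <= t * fine (chi0 y) + (1 - t) * fine (chi0 z).
Proof.
move=> dy dz t01; have := chi0_convex y z t t01.
rewrite (edom_fine dy) (edom_fine dz) -!EFinM -EFinD.
have := chi0_proper.1 (t *: y + (1 - t) *: z); rewrite /edom /=.
by case: (chi0 _) => //= c _; rewrite lee_fin ltry.
Qed.

Lemma model_feas_convex {e xk y z t} : feas e xk y -> feas e xk z ->
  edom chi0 y -> edom chi0 z -> 0 <= t <= 1 -> feas e xk (t *: y + (1 - t) *: z).
Proof.
move=> fy fz dy dz t01 i; have chic_le := chic_convex i y z t dy dz t01.
move: t01 (fy i) (fz i) => /andP[t_ge0 t_le1]; rewrite /sub_con => fy_i fz_i.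
have t'_ge0 : 0 <= 1 - t by rewrite subr_ge0.
rewrite subr_convex_comb dotpDr !dotpZr sqnorm_convex_comb.
have fy_t := ler_wpM2l t_ge0 fy_i; have fz_t := ler_wpM2l t'_ge0 fz_i.
have curv : 0 <= Lc i / 2 * (t * (1 - t) * sqnorm ((y - xk) - (z - xk))).
  by rewrite !mulr_ge0 ?divr_ge0 ?sqnorm_ge0 ?Lc_ge0 ?subr_ge0.
have -> : e i = t * e i + (1 - t) * e i by ring.
lra.
Qed.

Lemma model_feas_center {e xk} :
  (forall i, fc i xk + chic i xk <= e i) -> feas e xk xk.
Proof.
by move=> xk_feas i; rewrite /sub_con subrr dotp0r /sqnorm dotp0r mulr0 !addr0.
Qed.

Section Argmin.
Context {e : 'I_m -> R} {xk G xp : vec}.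
Hypothesis xp_min : forall z, feas e xk z -> (obj G xk xp <= obj G xk z)%E.
Hypothesis xp_feas : feas e xk xp.

Lemma model_argmin_edom {y} : feas e xk y -> edom chi0 y -> edom chi0 xp.
Proof.
move=> fy dy; have := xp_min _ fy.
rewrite /sub_obj (edom_fine dy) -EFinD /edom /=.
by have := chi0_proper.1 xp; case: (chi0 xp) => //= c _; rewrite ltry.
Qed.

(* gamma-strong convexity of the model at its minimizer: compare xp with the
   points of the segment [xp, y] and let them tend to xp. *)
Lemma model_three_point {y} : feas e xk y -> edom chi0 y ->
  dotp G xp + gamma / 2 * sqnorm (xp - xk) + fine (chi0 xp)
    + gamma / 2 * sqnorm (y - xp)
  <= dotp G y + gamma / 2 * sqnorm (y - xk) + fine (chi0 y).
Proof.
move=> fy dy; have dxp := model_argmin_edom fy dy.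
set P := sqnorm (y - xk); set Q := sqnorm (xp - xk); set D := sqnorm (y - xp).
set cy := fine (chi0 y); set cx := fine (chi0 xp).
set gap := dotp G y + gamma / 2 * P + cy - (dotp G xp + gamma / 2 * Q + cx).
suff : ((gamma / 2 * D)%:E <= gap%:E)%E by rewrite lee_fin /gap; lra.
apply/lee_mul01Pr; first by rewrite lee_fin mulr_ge0 ?divr_ge0 ?sqnorm_ge0 ?ltW.
move=> r /andP[r_gt0 r_lt1]; rewrite -EFinM lee_fin.
have t01 : 0 <= 1 - r <= 1 by apply/andP; split; lra.
have [dz cz] := edom_convex_comb dy dxp t01.
have := xp_min _ (model_feas_convex fy xp_feas dy dxp t01).
rewrite /sub_obj (edom_fine dxp) (edom_fine dz) -!EFinD lee_fin.
rewrite subr_convex_comb sqnorm_convex_comb dotpDr !dotpZr.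
rewrite (_ : (y - xk) - (xp - xk) = y - xp); last by rewrite opprB addrA subrK.
rewrite -/P -/Q -/D -/cx -/cy in cz * => xp_le.
have : 0 <= (1 - r) * (gap - r * (gamma / 2 * D)) by rewrite /gap; lra.
by rewrite pmulr_rge0 ?subr_ge0 // subr_gt0.
Qed.

End Argmin.

End LinearizedModel.

Definition svrg_err {R : realType} {d n b : nat}
    (gF : 'I_n -> 'rV[R]_d -> 'rV[R]_d) (T : nat) (w : nat -> batch n b)
    (x : nat -> 'rV[R]_d) (k : nat) : 'rV[R]_d :=
  gavg gF (x k) - svrgG gF T w x k.

Section SVRGEstimator.
Context {R : realType} {d n b : nat}.
Local Notation vec := 'rV[R]_d.
Context {gF : 'I_n -> vec -> vec} {T : nat}.
Implicit Types (w : nat -> batch n b) (x : nat -> vec).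

Lemma svrgG_causal k w w' x x' :
  (forall i, (i <= k)%N -> w i = w' i) -> (forall i, (i <= k)%N -> x i = x' i) ->
  svrgG gF T w x k = svrgG gF T w' x' k.
Proof.
elim: k w w' x x' => [|k IHk] w w' x x' ww' xx' /=; first by rewrite xx'.
rewrite ww' // !xx' ?leqnSn // (IHk w w' x x') // => i ik.
  by rewrite ww' // leqW.
by rewrite xx' // leqW.
Qed.

Lemma svrg_err_epoch w x r : svrg_err gF T w x (r * T) = 0.
Proof.
rewrite /svrg_err; case rT: (r * T)%N => [|k] /=; first by rewrite subrr.
by rewrite -rT dvdn_mull // subrr.
Qed.

Lemma svrg_errS w x k : (0 < b)%N -> ~~ (T %| k.+1)%N ->
  svrg_err gF T w x k.+1 = svrg_err gF T w x k
    + batch_mean (center (fun i => gF i (x k.+1) - gF i (x k))) (w k.+1).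
Proof.
move=> b_gt0 Tk; rewrite /svrg_err /= (negbTE Tk) /batch_mean /center.
have b_neq0 : b%:R != 0 :> R by rewrite pnatr_eq0 -lt0n.
rewrite [in RHS]sumrB sumr_const card_ord scalerBr -scalerMnr scalerMnl.
rewrite -[b%:R^-1 *+ b]mulr_natr mulVf // scale1r.
have -> : n%:R^-1 *: \sum_j (gF j (x k.+1) - gF j (x k))
    = gavg gF (x k.+1) - gavg gF (x k) by rewrite sumrB scalerBr.
by set S := b%:R^-1 *: _; apply/rowP => i; rewrite !mxE; ring.
Qed.

End SVRGEstimator.

Lemma sum_le_telescope {R : realDomainType} (P a : nat -> R) (k0 t : nat) :
  (forall k, a k <= P k - P k.+1) ->
  \sum_(j < t) a (k0 + j)%N <= P k0 - P (k0 + t)%N.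
Proof.
move=> aP; elim: t => [|t IHt]; first by rewrite big_ord0 addn0 subrr.
by rewrite big_ord_recr /= addnS; have := aP (k0 + t)%N; lra.
Qed.

Lemma sum_partial_sums_le {R : numDomainType} (a : nat -> R) (t : nat) :
  (forall i, 0 <= a i) ->
  \sum_(j < t.+1) \sum_(i < j) a i <= t%:R * \sum_(i < t.+1) a i.
Proof.
move=> a_ge0; elim: t => [|t IHt]; first by rewrite big_ord1 big_ord0 mul0r.
have sum_ge0 : 0 <= \sum_(i < t.+1) a i by apply: sumr_ge0.
rewrite big_ord_recr [X in _ <= _ * X]big_ord_recr /= -natr1 mulrDl mul1r.
apply: lerD; last by rewrite lerDl.
by apply: le_trans IHt _; rewrite ler_wpM2l // lerDl.
Qed.

Section Run.
Context {R : realType} {d n b m : nat}.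
Local Notation vec := 'rV[R]_d.
Context {F : 'I_n -> vec -> R} {gF : 'I_n -> vec -> vec} {L0 : R}
  {chi0 : vec -> \bar R} {fc : 'I_m -> vec -> R} {gc : 'I_m -> vec -> vec}
  {Lc : 'I_m -> R} {chic : 'I_m -> vec -> R} {gamma : R} {T : nat}
  {eta : nat -> 'I_m -> R} {x0 : vec} {X : (nat -> batch n b) -> nat -> vec}.
Hypothesis n_gt0 : (0 < n)%N.
Hypothesis b_gt0 : (0 < b)%N.
Hypothesis F_grad : forall j, is_gradient (F j) (gF j).
Hypothesis gF_lip : forall j, lipschitz_map L0 (gF j).
Hypothesis chi0_proper : proper_fun chi0.
Hypothesis chi0_convex : convex_efun chi0.
Hypothesis fc_grad : forall i, is_gradient (fc i) (gc i).
Hypothesis gc_lip : forall i, lipschitz_map (Lc i) (gc i).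
Hypothesis chic_convex : forall i, convex_on (edom chi0) (chic i).
Hypothesis gamma_gt0 : 0 < gamma.
Hypothesis x0_edom : edom chi0 x0.
Hypothesis x0_feas : forall i, fc i x0 + chic i x0 <= eta 0%N i.
Hypothesis eta_nondecr : forall k i, eta k i <= eta k.+1 i.
Hypothesis X_run :
  forall w, lcsvrg_run gF chi0 fc gc Lc chic gamma T eta x0 w (X w).

Local Notation feas k w := (model_feas fc gc Lc chic (eta k) (X w k)).
Local Notation G w k := (svrgG gF T w (X w) k).
Local Notation err w k := (svrg_err gF T w (X w) k).
Local Notation psi y := (fine ((favg F y)%:E + chi0 y)%E).

Lemma run_argmin w k : feas k w (X w k.+1) /\
  forall y, feas k w y ->
    (sub_obj chi0 gamma (G w k) (X w k) (X w k.+1)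
     <= sub_obj chi0 gamma (G w k) (X w k) y)%E.
Proof. exact: (X_run w).2 k. Qed.

Lemma run_three_point w k {y} : feas k w y -> edom chi0 y ->
  dotp (G w k) (X w k.+1) + gamma / 2 * sqnorm (X w k.+1 - X w k)
    + fine (chi0 (X w k.+1)) + gamma / 2 * sqnorm (y - X w k.+1)
  <= dotp (G w k) y + gamma / 2 * sqnorm (y - X w k) + fine (chi0 y).
Proof.
have [xk1_feas xk1_min] := run_argmin w k.
exact: (model_three_point chi0_proper chi0_convex (fun i => (gc_lip i).1)
  chic_convex gamma_gt0 xk1_min xk1_feas).
Qed.

(* The linearized constraints majorize psi_i by the descent lemma, so every
   iterate is feasible for the current levels eta^k. *)
Lemma run_edom_feas w k :
  edom chi0 (X w k) /\ forall i, fc i (X w k) + chic i (X w k) <= eta k i.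
Proof.
elim: k => [|k [xk_edom xk_feas]]; first by rewrite (X_run w).1.
have [xk1_feas xk1_min] := run_argmin w k.
have xk_center : feas k w (X w k) := model_feas_center xk_feas.
split; first exact: (model_argmin_edom chi0_proper xk1_min xk_center xk_edom).
move=> i; have := xk1_feas i; rewrite /sub_con.
have := descent_lemma (fc_grad i) (gc_lip i) (X w k) (X w k.+1).
by have := eta_nondecr k i; lra.
Qed.

Lemma run_edom w k : edom chi0 (X w k).
Proof. by case: (run_edom_feas w k). Qed.

(* The subproblems are strongly convex, so their minimizers are unique and
   x^k depends only on the first k mini-batches. *)
Lemma run_causal j w w' : (forall i, (i < j)%N -> w i = w' i) ->
  forall i, (i <= j)%N -> X w i = X w' i.
Proof.
elim: j w w' => [|j IHj] w w' ww' i.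
  by rewrite leqn0 => /eqP ->; rewrite (X_run w).1 (X_run w').1.
have XX' := IHj w w' (fun i ij => ww' i (leqW ij)).
rewrite leq_eqVlt => /orP[/eqP ->|]; last exact: XX'.
have GG' : G w' j = G w j.
  by apply: svrgG_causal => l lj; rewrite ?ww' ?XX'.
have [f1 _] := run_argmin w j; have [f2 _] := run_argmin w' j.
rewrite -XX' // in f2.
have := run_three_point w j f2 (run_edom w' j.+1).
have := run_three_point w' j; rewrite -XX' // GG' => /(_ _ f1 (run_edom w j.+1)).
rewrite (sqnormBC (X w' j.+1) (X w j.+1)) => le1 le2.
have : gamma * sqnorm (X w j.+1 - X w' j.+1) <= 0 by lra.
rewrite pmulr_rle0 // => sq_le0.
apply/eqP; rewrite -subr_eq0; apply/eqP/sqnorm_eq0/le_anti.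
by rewrite sq_le0 sqnorm_ge0.
Qed.

Lemma run_descent_step beta w k : 0 < beta ->
  psi (X w k.+1) <= psi (X w k)
    - (gamma - L0 / 2 - beta / 2) * sqnorm (X w k.+1 - X w k)
    + sqnorm (err w k) / (2 * beta).
Proof.
move=> beta_gt0; have [xk_edom xk_feas] := run_edom_feas w k.
rewrite (edom_fine chi0_proper xk_edom).
rewrite (edom_fine chi0_proper (run_edom w k.+1)) -!EFinD /=.
have xk_center : feas k w (X w k) := model_feas_center xk_feas.
have := run_three_point w k xk_center xk_edom.
rewrite subrr /sqnorm dotp0r mulr0 addr0 -!/(sqnorm _) (sqnormBC (X w k)).
have := favg_descent n_gt0 F_grad gF_lip (X w k) (X w k.+1).
have := dotp_le_young (err w k) (X w k.+1 - X w k) beta_gt0.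
rewrite /svrg_err !dotpBl !dotpBr; lra.
Qed.

Lemma run_path_upd w k B i : (i <= k.+1)%N -> X (path_upd w k.+1 B) i = X w i.
Proof.
by move=> ik; apply: (run_causal k.+1) => // l lk; rewrite /path_upd ltn_eqF.
Qed.

Lemma svrg_err_path_upd w k B : err (path_upd w k.+1 B) k = err w k.
Proof.
rewrite /svrg_err run_path_upd //; congr (_ - _).
apply: svrgG_causal => l lk; first by rewrite /path_upd ltn_eqF.
by rewrite run_path_upd // leqW.
Qed.

Local Notation Edx N w0 k := (Exp N w0 (fun w => sqnorm (X w k.+1 - X w k))).
Local Notation Eerr N w0 k := (Exp N w0 (fun w => sqnorm (err w k))).
Local Notation Epsi N w0 k := (Exp N w0 (fun w => psi (X w k))).

Lemma Exp_descent_step N w0 beta k : 0 < beta ->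
  (gamma - L0 / 2 - beta / 2) * Edx N w0 k - (2 * beta)^-1 * Eerr N w0 k
  <= Epsi N w0 k - Epsi N w0 k.+1.
Proof.
move=> beta_gt0; suff : Epsi N w0 k.+1 <= Epsi N w0 k
    - (gamma - L0 / 2 - beta / 2) * Edx N w0 k + (2 * beta)^-1 * Eerr N w0 k.
  by lra.
rewrite -!ExpZ -ExpB -ExpD; apply: ler_Exp => w /=.
by rewrite [_^-1 * _]mulrC; exact: run_descent_step.
Qed.

(* Resampling the fresh mini-batch w_{k+1}: the cross term has mean zero and
   the mini-batch mean has 1/b of the variance of one centred increment. *)
Lemma Exp_sqnorm_errS N w0 k : (k.+1 < N)%N -> ~~ (T %| k.+1)%N ->
  Eerr N w0 k.+1 <= Eerr N w0 k + L0 ^+ 2 / b%:R * Edx N w0 k.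
Proof.
move=> kN Tk.
pose z w i := gF i (X w k.+1) - gF i (X w k).
pose v w := batch_mean (center (z w)) (w k.+1).
have v_upd w B : v (path_upd w k.+1 B) = batch_mean (center (z w)) B.
  rewrite /v /path_upd eqxx; congr (batch_mean (center _) B).
  by apply: funext => i; rewrite /z !run_path_upd.
rewrite (eq_Exp _ (fun w => sqnorm (err w k) + 2 * dotp (err w k) (v w)
  + sqnorm (v w))); last by move=> w; rewrite svrg_errS // sqnormD.
rewrite !ExpD ExpZ.
have cross0 : Exp N w0 (fun w => dotp (err w k) (v w)) = 0.
  rewrite (Exp_resample n_gt0 kN) (eq_Exp _ (fun _ => 0)) ?Exp0 // => w.
  transitivity (avg_batch (fun B : batch n b =>
    dotp (err w k) (batch_mean (center (z w)) B))).
    by congr avg_batch; apply: funext => B; rewrite svrg_err_path_upd v_upd.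
  exact: avg_batch_dotp_mean0 n_gt0 _ _ (sum_center n_gt0 _).
suff : Exp N w0 (fun w => sqnorm (v w)) <= L0 ^+ 2 / b%:R * Edx N w0 k.
  by rewrite cross0 mulr0 addr0; lra.
rewrite (Exp_resample n_gt0 kN) -ExpZ; apply: ler_Exp => w.
rewrite (_ : avg_batch _
    = avg_batch (fun B : batch n b => sqnorm (batch_mean (center (z w)) B)));
  last by congr avg_batch; apply: funext => B; rewrite v_upd.
rewrite (avg_batch_sqnorm_mean n_gt0 b_gt0 _ (sum_center n_gt0 (z w))).
have z_le : \sum_i sqnorm (z w i) <= n%:R * (L0 ^+ 2 * sqnorm (X w k.+1 - X w k)).
  rewrite mulr_natl -[n in _ *+ n]card_ord -sumr_const.
  by apply: ler_sum => i _; exact: lipschitz_sqnorm.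
have bn_inv_ge0 : 0 <= (b%:R * n%:R)^-1 :> R by rewrite invr_ge0 mulr_ge0.
have center_le := le_trans (sum_sqnorm_center n_gt0 _) z_le.
apply: le_trans (ler_wpM2l bn_inv_ge0 center_le) _.
rewrite le_eqVlt; apply/orP; left; apply/eqP; field.
by rewrite !pnatr_eq0 -!lt0n n_gt0 b_gt0.
Qed.

Lemma Exp_sqnorm_err_le N w0 r j : (j < T)%N -> (r * T + j < N)%N ->
  Eerr N w0 (r * T + j)%N <= L0 ^+ 2 / b%:R * \sum_(i < j) Edx N w0 (r * T + i)%N.
Proof.
elim: j => [|j IHj] jT jN.
  rewrite big_ord0 mulr0 addn0 (eq_Exp _ (fun _ => 0)) ?Exp0 // => w.
  by rewrite svrg_err_epoch /sqnorm dotp0l.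
rewrite addnS in jN *.
have T_ndvd : ~~ (T %| (r * T + j).+1)%N.
  by rewrite -addnS dvdn_addr ?dvdn_mull // gtnNdvd.
apply: le_trans (Exp_sqnorm_errS _ _ _ jN T_ndvd) _.
rewrite big_ord_recr /= mulrDr lerD2r.
by apply: IHj; exact: ltnW.
Qed.

Lemma sum_Exp_sqnorm_err_le N w0 r t : (t < T)%N -> (r * T + t < N)%N ->
  \sum_(j < t.+1) Eerr N w0 (r * T + j)%N
  <= L0 ^+ 2 / b%:R * ((T - 1)%:R * \sum_(j < t.+1) Edx N w0 (r * T + j)%N).
Proof.
move=> tT tN.
apply: le_trans (_ : _ <= L0 ^+ 2 / b%:R
    * \sum_(j < t.+1) \sum_(i < j) Edx N w0 (r * T + i)%N) _.
  rewrite mulr_sumr; apply: ler_sum => j _; apply: Exp_sqnorm_err_le.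
    exact: leq_trans (ltn_ord j) tT.
  by apply: leq_ltn_trans _ tN; rewrite leq_add2l -ltnS.
have Edx_ge0 k : 0 <= Edx N w0 k by apply: Exp_ge0 => w; exact: sqnorm_ge0.
rewrite ler_wpM2l ?divr_ge0 ?sqr_ge0 //.
apply: le_trans (sum_partial_sums_le _ t (fun i => Edx_ge0 (r * T + i)%N)) _.
apply: ler_wpM2r; first by apply: sumr_ge0 => j _; exact: Edx_ge0.
by rewrite ler_nat leq_subRL ?add1n // (leq_trans _ tT).
Qed.

Lemma epoch_descent N w0 beta r t : 0 < beta -> (t < T)%N -> (r * T + t < N)%N ->
  ((2 * gamma - beta - L0) / 2 - L0 ^+ 2 * (T - 1)%:R / (2 * beta * b%:R))
  * \sum_(j < t.+1)
      Exp N w0 (fun w => sqnorm (X w (r * T + j.+1)%N - X w (r * T + j)%N))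
  <= Epsi N w0 (r * T)%N - Epsi N w0 (r * T + t.+1)%N.
Proof.
move=> beta_gt0 tT tN; under eq_bigr => j _ do rewrite addnS.
have := sum_le_telescope (fun k => Epsi N w0 k) _ (r * T) t.+1
  (fun k => Exp_descent_step N w0 beta k beta_gt0).
rewrite sumrB -[\sum_(j < t.+1) _ * Edx _ _ _]mulr_sumr.
rewrite -[\sum_(j < t.+1) _ * Eerr _ _ _]mulr_sumr => descent.
have := sum_Exp_sqnorm_err_le N w0 r t tT tN.
move: descent; set S := \sum_(j < t.+1) _; set V := \sum_(j < t.+1) _.
move=> descent V_le.
have ib_ge0 : 0 <= (2 * beta)^-1 by rewrite invr_ge0 mulr_ge0 // ltW.
have -> : ((2 * gamma - beta - L0) / 2
           - L0 ^+ 2 * (T - 1)%:R / (2 * beta * b%:R)) * S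
    = (gamma - L0 / 2 - beta / 2) * S
      - (2 * beta)^-1 * (L0 ^+ 2 / b%:R * ((T - 1)%:R * S)).
  by field; rewrite !gt_eqF // ltr0n.
by have := ler_wpM2l ib_ge0 V_le; lra.
Qed.

End Run.

Theorem mainTheorem14 (R : realType) (d n b m T : nat)
  (hn : (0 < n)%N) (hb : (0 < b)%N) (hT : (0 < T)%N)
  (F : 'I_n -> 'rV[R]_d -> R) (gF : 'I_n -> 'rV[R]_d -> 'rV[R]_d) (L0 : R)
  (hF : forall j, is_gradient (F j) (gF j))
  (hL0 : forall j, lipschitz_map L0 (gF j))
  (chi0 : 'rV[R]_d -> \bar R)
  (hchi0p : proper_fun chi0) (hchi0c : convex_efun chi0)
  (hchi0l : lower_semicontinuous chi0)
  (fc : 'I_m -> 'rV[R]_d -> R) (gc : 'I_m -> 'rV[R]_d -> 'rV[R]_d)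
  (Lc : 'I_m -> R) (chic : 'I_m -> 'rV[R]_d -> R) (etabar : 'I_m -> R)
  (hfc : forall i, is_gradient (fc i) (gc i))
  (hLc : forall i, lipschitz_map (Lc i) (gc i))
  (hchic : forall i, convex_on (edom chi0) (chic i) /\
                     {within edom chi0, continuous (chic i)})
  (hfeas : let Feas := [set x | edom chi0 x /\
                          forall i, fc i x + chic i x <= etabar i] in
           Feas !=set0 /\ compact Feas /\
           exists lb : R, forall x, Feas x ->
             (lb%:E <= (favg F x)%:E + chi0 x)%E)
  (gamma : R) (hgamma : 0 < gamma)
  (x0 : 'rV[R]_d) (hx0 : edom chi0 x0)
  (eta : nat -> 'I_m -> R)
  (heta0 : forall i, fc i x0 + chic i x0 < eta 0%N i /\ eta 0%N i < etabar i)
  (heta : forall k i, eta k i < eta k.+1 i /\ eta k.+1 i < etabar i)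
  (* the iterates, as functions of the sample path of mini-batches *)
  (X : (nat -> batch n b) -> nat -> 'rV[R]_d)
  (hX : forall w, lcsvrg_run gF chi0 fc gc Lc chic gamma T eta x0 w (X w))
  (beta : R) (hbeta : 0 < beta < 2 * gamma - L0)
  (hLt : 0 < (2 * gamma - beta - L0) / 2
             - L0 ^+ 2 * (T - 1)%:R / (2 * beta * b%:R))
  (w0 : batch n b) (r t : nat) (ht : (t < T)%N) :
  let Lt := (2 * gamma - beta - L0) / 2
            - L0 ^+ 2 * (T - 1)%:R / (2 * beta * b%:R) in
  let N := (r * T + t + 1)%N in
  let psi0 := fun x => fine ((favg F x)%:E + chi0 x)%E in
  Lt * (\sum_(j < t.+1)
          Exp N w0 (fun w => sqnorm (X w (r * T + j.+1)%N - X w (r * T + j)%N)))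
  <= Exp N w0 (fun w => psi0 (X w (r * T)%N))
     - Exp N w0 (fun w => psi0 (X w (r * T + t.+1)%N)).
Proof.
have beta_gt0 : 0 < beta by case/andP: hbeta.
cbv zeta; apply: (epoch_descent hn hb hF hL0 hchi0p hchi0c hfc hLc
  (fun i => (hchic i).1) hgamma hx0 (fun i => ltW (heta0 i).1)
  (fun k i => ltW (heta k i).1) hX) => //.
by rewrite addn1.
Qed.
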